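(* Let $g_->0$ and let $\psi:[0,1]\to\mathbb{R}$ be $C^1$ with $\psi(0)=0$ and $0<\psi(z)\le\psi(1)$ for all $z\in(0,1)$. For $\sigma>0$, $c_0>0$ and $c_0'\in\mathbb{R}$ consider the Cauchy problem $$-c''+\psi\big(e^{g_-x/\sigma}\big)c=0\quad (x<0),\qquad c(0)=c_0,\quad c'(0)=c_0'.$$ Then there exists a continuous mapping $\sigma\mapsto A(\sigma)\in(0,\sqrt{\psi(1)}\,]$ on $(0,\infty)$ such that the solution of this Cauchy problem is defined, nonnegative and nondecreasing on $(-\infty,0]$ if and only if $c_0'=A(\sigma)c_0$. Moreover $$A(\sigma)\le\frac{\sigma}{g_-}\int_0^1\frac{\psi(\nu)}{\nu}\,d\nu\quad\text{for all }\sigma>0,$$ and $A$ extends continuously to $\sigma=0$ with $A(0)=0$.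
   Context: The integral $\int_0^1\psi(\nu)/\nu\,d\nu$ is finite since $\psi\in C^1([0,1])$ with $\psi(0)=0$. *)

From Stdlib Require Import Reals Lra.
Open Scope R_scope.

Definition has_deriv_within (D : R -> Prop) (f f' : R -> R) (x : R) : Prop :=
  limit1_in (fun y => (f y - f x) / (y - x)) (fun y => D y /\ y <> x) (f' x) x.

Definition in01 (x : R) : Prop := 0 <= x <= 1.

Definition C1_on_01 (psi : R -> R) : Prop :=
  exists dpsi : R -> R,
    (forall x, in01 x -> has_deriv_within in01 psi dpsi x) /\
    (forall x, in01 x -> limit1_in dpsi in01 (dpsi x) x).

Definition nonpos (x : R) : Prop := x <= 0.

Definition cauchy_sol (psi : R -> R) (gm sigma c0 c0' : R) (c : R -> R) : Prop :=
  exists dc ddc : R -> R,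
    (forall x, x <= 0 -> has_deriv_within nonpos c dc x) /\
    (forall x, x < 0 -> derivable_pt_lim dc x (ddc x)) /\
    (forall x, x < 0 -> - ddc x + psi (exp (gm * x / sigma)) * c x = 0) /\
    c 0 = c0 /\ dc 0 = c0'.

Definition nonneg_nondecr_on_nonpos (c : R -> R) : Prop :=
  (forall x, x <= 0 -> 0 <= c x) /\
  (forall x y, x <= y -> y <= 0 -> c x <= c y).

From Pilot Require Import Defs.
From Coquelicot Require Import Coquelicot.
From Stdlib Require Import Reals Lra Lia.
Open Scope R_scope.

(** In the variable [z = exp (gm x / s)] the equation has a
    distinguished solution, an entire power series in [lam = (s/gm)^2] whose
    coefficients [a_n z] are iterated integrals of [phi z = psi z / z]
    (extended continuously at 0):  [cstar x = sum lam^n a_n (E x)] and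
    [cstar' = dstar = (s/gm) sum lam^n v_n (E x)], with [cstar >= 1]
    nondecreasing on (-oo,0].  The theorem holds with [A s = dstar 0 / cstar 0]:
    - by reduction of order every solution is [cstar (K - W J)] with
      [J x = int_x^0 1/cstar^2] and [c0' = A c0 + W / cstar 0]; since [J]
      grows linearly at -oo, [c] is nonnegative and nondecreasing iff [W = 0];
    - [0 < A <= sqrt (psi 1)] by positivity of the series and monotonicity of
      the energy [dstar^2 - psi 1 * cstar^2]; [A <= (s/gm) int_0^1 phi]
      because [v_n 1 <= a_n 1 * v_0 1];
    - as a function of [s], [A = (s/gm) V((s/gm)^2) / C((s/gm)^2)] for entire
      power series [V] and [C >= 1]: continuous on the whole line, 0 at 0.
    The file develops, in order: one-sided limits and integration tools; the
    coefficient [phi]; the functions [a_n, v_n] with exponential bounds;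
    termwise differentiation of series; the series in [lam]; the
    distinguished solution, existence and the characterization; the function
    [A] and the theorem. *)

Lemma limit1_in_elim f D l x0 : limit1_in f D l x0 ->
  forall eps, 0 < eps -> exists del, 0 < del /\
    forall y, D y -> Rabs (y - x0) < del -> Rabs (f y - l) < eps.
Proof.
intros H eps He. destruct (H eps He) as [del [Hd H2]].
exists del; split; auto. intros y Dy Hy. apply (H2 y). split; auto.
Qed.

Lemma limit1_in_intro f D l x0 :
  (forall eps, 0 < eps -> exists del, 0 < del /\
     forall y, D y -> Rabs (y - x0) < del -> Rabs (f y - l) < eps) ->
  limit1_in f D l x0.
Proof.
intros H eps He. destruct (H eps He) as [del [Hd H2]].
exists del; split; auto. intros y [Dy Hy]. apply H2; auto.
Qed.

Lemma continuity_pt_intro f x :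
  (forall eps, 0 < eps -> exists del, 0 < del /\
     forall y, Rabs (y - x) < del -> Rabs (f y - f x) < eps) ->
  continuity_pt f x.
Proof.
intros H. apply limit1_in_intro. intros eps He.
destruct (H eps He) as [d [Hd H2]]. exists d; split; auto.
Qed.

Lemma continuity_pt_elim f x : continuity_pt f x ->
  forall eps, 0 < eps -> exists del, 0 < del /\
    forall y, Rabs (y - x) < del -> Rabs (f y - f x) < eps.
Proof.
intros H eps He. destruct (limit1_in_elim _ _ _ _ H eps He) as [d [Hd H2]].
exists d; split; auto. intros y Hy. destruct (Req_dec y x) as [->|Hyx].
- rewrite Rminus_diag, Rabs_R0; auto.
- apply H2; auto. split; [exact I | auto].
Qed.

Lemma limit1_in_ext f g D l x0 : (forall y, D y -> f y = g y) ->
  limit1_in f D l x0 -> limit1_in g D l x0.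
Proof.
intros He H. apply limit1_in_intro. intros eps Hp.
destruct (limit1_in_elim _ _ _ _ H eps Hp) as [d [Hd H2]].
exists d; split; auto. intros y Dy Hy. rewrite <- He; auto.
Qed.

Lemma continuity_pt_continuous f x : continuity_pt f x -> continuous f x.
Proof. apply continuity_pt_filterlim. Qed.

Lemma continuous_continuity_pt f x : continuous f x -> continuity_pt f x.
Proof. apply continuity_pt_filterlim. Qed.

Lemma is_derive_continuity_pt (f : R -> R) x l : is_derive f x l -> continuity_pt f x.
Proof.
intros H. apply continuous_continuity_pt.
apply (ex_derive_continuous (K:=R_AbsRing) (V:=R_NormedModule)). eexists; eauto.
Qed.

Lemma is_derive_eq (f : R -> R) (x d d' : R) : is_derive f x d -> d = d' -> is_derive f x d'.
Proof. intros H <-; exact H. Qed.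

Lemma zero_derive_const_neg (f : R -> R) :
  (forall x, x < 0 -> is_derive f x 0) -> forall x y, x < 0 -> y < 0 -> f x = f y.
Proof.
intros Hf x y Hx Hy.
assert (Hin : forall t, Rmin x y <= t <= Rmax x y -> t < 0)
  by (intros t Ht; unfold Rmin, Rmax in Ht; destruct Rle_dec; lra).
destruct (MVT_gen f x y (fun _ => 0)) as [z [_ Hz]].
- intros t Ht. apply Hf, Hin. lra.
- intros t Ht. apply (is_derive_continuity_pt _ _ 0), Hf, Hin; auto.
- lra.
Qed.

Lemma limit1_in_restrict f (D D' : R -> Prop) l x0 :
  (forall y, D' y -> D y) -> limit1_in f D l x0 -> limit1_in f D' l x0.
Proof.
intros HD H. apply limit1_in_intro. intros eps He.
destruct (limit1_in_elim _ _ _ _ H eps He) as [d [Hd H2]]. exists d; split; auto.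
Qed.

Lemma left_limit_unique f l l' :
  limit1_in f (fun y => y < 0) l 0 -> limit1_in f (fun y => y < 0) l' 0 -> l = l'.
Proof.
apply single_limit. intros alp Ha. exists (- alp / 2). split; [lra|].
unfold Rdist. rewrite Rminus_0_r, Rabs_left; lra.
Qed.

Lemma continuity_pt_left_limit f : continuity_pt f 0 -> limit1_in f (fun y => y < 0) (f 0) 0.
Proof.
intros H. apply limit1_in_intro. intros eps He.
destruct (continuity_pt_elim f 0 H eps He) as [d [Hd H2]]. exists d; split; auto.
Qed.

Lemma has_deriv_within_left_quotient c dc :
  has_deriv_within Defs.nonpos c dc 0 ->
  limit1_in (fun y => (c y - c 0) / (y - 0)) (fun y => y < 0) (dc 0) 0.
Proof. apply limit1_in_restrict. intros y Hy. unfold Defs.nonpos. split; lra. Qed.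

Lemma has_deriv_within_left_cont c dc :
  has_deriv_within Defs.nonpos c dc 0 -> limit1_in c (fun y => y < 0) (c 0) 0.
Proof.
intros H. pose proof (has_deriv_within_left_quotient c dc H) as Hq.
pose proof (continuity_pt_left_limit (fun y => y - 0) (continuity_pt_minus _ _ 0
  (continuity_pt_id 0) (continuity_pt_const (fun _ => 0) 0 (fun _ _ => eq_refl)))) as Hy.
pose proof (limit_plus _ _ _ _ _ _ (limit_free (fun _ => c 0) (fun y => y < 0) 0 0)
  (limit_mul _ _ _ _ _ _ Hy Hq)) as Hs.
simpl in Hs. replace (c 0 + (0 - 0) * dc 0) with (c 0) in Hs by ring.
revert Hs. apply limit1_in_ext. intros y Hneg. field. lra.
Qed.

Lemma is_derive_has_deriv_within (f : R -> R) D f' x :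
  is_derive f x (f' x) -> has_deriv_within D f f' x.
Proof.
intros H. apply is_derive_Reals in H. apply limit1_in_intro. intros eps He.
destruct (H eps He) as [d Hd]. exists d. split; [apply cond_pos|]. intros y [_ Hy] Hyx.
specialize (Hd (y - x) ltac:(lra) Hyx). replace (x + (y - x)) with y in Hd by ring. auto.
Qed.

Lemma has_deriv_within_is_derive (f f' : R -> R) x :
  x < 0 -> has_deriv_within Defs.nonpos f f' x -> is_derive f x (f' x).
Proof.
intros Hx H. apply is_derive_Reals. intros eps He.
destruct (limit1_in_elim _ _ _ _ H eps He) as [d [Hd H2]].
assert (Hm : 0 < Rmin d (-x)) by (apply Rmin_pos; lra).
exists (mkposreal _ Hm). intros h Hh Hhd. simpl in Hhd.
assert (Rabs h < d) by (eapply Rlt_le_trans; [exact Hhd | apply Rmin_l]).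
assert (Rabs h < -x) by (eapply Rlt_le_trans; [exact Hhd | apply Rmin_r]).
specialize (H2 (x + h)). replace (x + h - x) with h in H2 by ring. apply H2; auto.
split; [unfold Defs.nonpos; unfold Rabs in *; destruct Rcase_abs|]; lra.
Qed.

Definition clamp01 (y : R) : R := Rmax 0 (Rmin 1 y).

Lemma clamp01_in y : 0 <= clamp01 y <= 1.
Proof. unfold clamp01, Rmax, Rmin; repeat destruct Rle_dec; lra. Qed.

Lemma clamp01_lipschitz y z : Rabs (clamp01 y - clamp01 z) <= Rabs (y - z).
Proof. unfold clamp01, Rmax, Rmin; repeat destruct Rle_dec; unfold Rabs; repeat destruct Rcase_abs; lra. Qed.

Lemma clamp01_id y : 0 <= y <= 1 -> clamp01 y = y.
Proof. unfold clamp01, Rmax, Rmin; repeat destruct Rle_dec; lra. Qed.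

(** The quotient [psi z / z] extended by its limit [d0] at 0 and made constant
    outside [0,1] is continuous on the whole real line.  This is the
    coefficient of the Cauchy problem in the variable [z = exp (gm x / s)]. *)
Section QuotientExtension.
Variables (psi : R -> R) (d0 : R).
Hypothesis quot_lim0 : forall eps, 0 < eps -> exists del, 0 < del /\
  forall y, 0 < y <= 1 -> y < del -> Rabs (psi y / y - d0) < eps.
Hypothesis psi_cont01 : forall r, 0 <= r <= 1 -> forall eps, 0 < eps ->
  exists del, 0 < del /\ forall y, 0 <= y <= 1 -> Rabs (y - r) < del -> Rabs (psi y - psi r) < eps.

Definition quot_on01 (z : R) : R := if Rle_dec z 0 then d0 else psi z / z.
Definition quot_ext (r : R) : R := quot_on01 (clamp01 r).

(* Away from 0, continuity of a quotient with denominator bounded below by z/2. *)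
Lemma quot_cont_pos z : 0 < z <= 1 -> forall eps, 0 < eps -> exists del, 0 < del /\
  forall y, 0 <= y <= 1 -> Rabs (y - z) < del -> Rabs (psi y / y - psi z / z) < eps.
Proof.
intros Hz eps He.
set (K := Rabs (psi z) + 1).
assert (HK : 0 < K) by (unfold K; pose proof (Rabs_pos (psi z)); lra).
destruct (psi_cont01 z ltac:(lra) (eps * z / 8)) as [d [Hd H]].
{ apply Rdiv_lt_0_compat; [apply Rmult_lt_0_compat|]; lra. }
assert (Hd2 : 0 < eps * z * z / (4 * K))
  by (apply Rdiv_lt_0_compat; [apply Rmult_lt_0_compat; [apply Rmult_lt_0_compat|]|]; lra).
exists (Rmin d (Rmin (z/2) (eps * z * z / (4 * K)))).
split; [repeat apply Rmin_pos; lra|].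
intros y Hy Hyz.
assert (H1 : Rabs (y - z) < d) by (eapply Rlt_le_trans; [exact Hyz | apply Rmin_l]).
assert (H2 : Rabs (y - z) < z/2)
  by (eapply Rlt_le_trans; [exact Hyz | eapply Rle_trans; [apply Rmin_r | apply Rmin_l]]).
assert (H3 : Rabs (z - y) < eps * z * z / (4 * K)) by
  (rewrite Rabs_minus_sym; eapply Rlt_le_trans; [exact Hyz | eapply Rle_trans; [apply Rmin_r | apply Rmin_r]]).
assert (yp : z/2 < y) by (unfold Rabs in H2; destruct Rcase_abs; lra).
specialize (H y Hy H1).
replace (psi y / y - psi z / z) with ((psi y - psi z) / y + psi z * (z - y) / (y * z)) by (field; lra).
eapply Rle_lt_trans; [apply Rabs_triang|].
rewrite !Rabs_div, !Rabs_mult by nra.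
rewrite (Rabs_right y), (Rabs_right z) by lra.
assert (A1 : Rabs (psi y - psi z) / y <= (eps * z / 8) / (z/2)).
{ unfold Rdiv. apply Rmult_le_compat; try lra;
    [apply Rabs_pos | left; apply Rinv_0_lt_compat; lra | apply Rinv_le_contravar; lra]. }
assert (A2 : Rabs (psi z) * Rabs (z - y) / (y * z) <= K * (eps * z * z / (4 * K)) / (z / 2 * z)).
{ unfold Rdiv. apply Rmult_le_compat.
  - apply Rmult_le_pos; apply Rabs_pos.
  - left; apply Rinv_0_lt_compat; nra.
  - apply Rmult_le_compat; try apply Rabs_pos; unfold K, Rdiv in *; lra.
  - apply Rinv_le_contravar; nra. }
replace ((eps * z / 8) / (z/2)) with (eps / 4) in A1 by (field; lra).
replace (K * (eps * z * z / (4 * K)) / (z / 2 * z)) with (eps / 2) in A2 by (field; lra).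
lra.
Qed.

Lemma quot_on01_cont z : 0 <= z <= 1 -> forall eps, 0 < eps -> exists del, 0 < del /\
  forall y, 0 <= y <= 1 -> Rabs (y - z) < del -> Rabs (quot_on01 y - quot_on01 z) < eps.
Proof.
intros Hz eps He. unfold quot_on01.
destruct (Rle_dec z 0) as [Hz0|Hz0].
- destruct (quot_lim0 eps He) as [d [Hd H]]. exists d; split; auto. intros y Hy Hyz.
  destruct (Rle_dec y 0).
  + rewrite Rminus_diag, Rabs_R0; auto.
  + apply H; [lra|]. replace z with 0 in Hyz by lra.
    rewrite Rminus_0_r in Hyz. unfold Rabs in Hyz; destruct Rcase_abs; lra.
- destruct (quot_cont_pos z ltac:(lra) eps He) as [d [Hd H]].
  exists (Rmin d (z/2)). split; [apply Rmin_pos; lra|]. intros y Hy Hyz.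
  assert (Hy1 : Rabs (y - z) < d) by (eapply Rlt_le_trans; [exact Hyz | apply Rmin_l]).
  assert (Hy2 : Rabs (y - z) < z/2) by (eapply Rlt_le_trans; [exact Hyz | apply Rmin_r]).
  destruct (Rle_dec y 0); [unfold Rabs in Hy2; destruct Rcase_abs; lra|].
  apply H; auto.
Qed.

Lemma quot_ext_cont r : continuity_pt quot_ext r.
Proof.
apply continuity_pt_intro. intros eps He.
destruct (quot_on01_cont (clamp01 r) (clamp01_in r) eps He) as [d [Hd H]].
exists d; split; auto. intros y Hy. apply H; [apply clamp01_in|].
eapply Rle_lt_trans; [apply clamp01_lipschitz | auto].
Qed.

Lemma quot_ext_spec r : 0 < r <= 1 -> r * quot_ext r = psi r.
Proof.
intros H. unfold quot_ext, quot_on01. rewrite clamp01_id by lra.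
destruct Rle_dec; [lra|]. field. lra.
Qed.

Lemma quot_ext_clamp r : quot_ext r = quot_ext (clamp01 r).
Proof. unfold quot_ext. rewrite (clamp01_id (clamp01 r)) by apply clamp01_in. auto. Qed.

End QuotientExtension.

Definition cont_R (h : R -> R) : Prop := forall t, continuity_pt h t.

Lemma cont_R_const c : cont_R (fun _ => c).
Proof. intros t. apply continuity_pt_const. intros x y; auto. Qed.

Lemma cont_R_mult f g : cont_R f -> cont_R g -> cont_R (fun x => f x * g x).
Proof. intros Hf Hg t. apply continuity_pt_mult; auto. Qed.

Lemma cont_R_plus f g : cont_R f -> cont_R g -> cont_R (fun x => f x + g x).
Proof. intros Hf Hg t. apply continuity_pt_plus; auto. Qed.

Lemma cont_R_minus f g : cont_R f -> cont_R g -> cont_R (fun x => f x - g x).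
Proof. intros Hf Hg t. apply continuity_pt_minus; auto. Qed.

Lemma cont_R_ex_derive (f : R -> R) : (forall x, ex_derive f x) -> cont_R f.
Proof.
intros H t. apply continuous_continuity_pt.
apply (ex_derive_continuous (K:=R_AbsRing) (V:=R_NormedModule)), H.
Qed.

Lemma cont_R_pow L n : cont_R (fun s => (L * s) ^ n).
Proof. apply cont_R_ex_derive. intros. auto_derive. auto. Qed.

Lemma cont_R_sum (g : nat -> R -> R) N : (forall n, cont_R (g n)) ->
  cont_R (fun x => sum_f_R0 (fun n => g n x) N).
Proof. intros H. induction N; simpl; [apply H | apply cont_R_plus; auto]. Qed.

Lemma cont_R_RInt h a b : cont_R h -> ex_RInt h a b.
Proof.
intros H. apply (ex_RInt_continuous (V:=R_CompleteNormedModule)).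
intros; apply continuity_pt_continuous; auto.
Qed.

Lemma is_derive_RInt_cont h a x : cont_R h -> is_derive (fun y => RInt h a y) x (h x).
Proof.
intros H. apply (is_derive_RInt h (fun y => RInt h a y) a x).
- exists (mkposreal 1 Rlt_0_1). intros y _.
  apply (RInt_correct (V:=R_CompleteNormedModule)), cont_R_RInt; auto.
- apply continuity_pt_continuous; auto.
Qed.

Lemma cont_R_RInt_upper h a : cont_R h -> cont_R (fun y => RInt h a y).
Proof. intros H x. eapply is_derive_continuity_pt, is_derive_RInt_cont; auto. Qed.

Lemma abs_RInt_le_bound h a b M : ex_RInt h a b ->
  (forall t, Rmin a b <= t <= Rmax a b -> Rabs (h t) <= M) ->
  Rabs (RInt h a b) <= Rabs (b - a) * M.
Proof.
intros Hc H. destruct (Rle_dec a b).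
- rewrite (Rabs_right (b - a)) by lra. apply abs_RInt_le_const; auto.
  intros t Ht; apply H. rewrite Rmin_left, Rmax_right; lra.
- rewrite <- (opp_RInt_swap h) by (apply ex_RInt_swap; exact Hc).
  unfold opp; simpl. rewrite Rabs_Ropp, (Rabs_left (b - a)) by lra.
  replace (- (b - a)) with (a - b) by ring.
  apply abs_RInt_le_const; [lra | apply ex_RInt_swap; auto |].
  intros t Ht; apply H. rewrite Rmin_right, Rmax_left; lra.
Qed.

Lemma RInt_const_mul a b c : RInt (fun _ => c) a b = (b - a) * c.
Proof. rewrite RInt_const. reflexivity. Qed.

Lemma RInt_minus_cont f g a b : cont_R f -> cont_R g ->
  RInt (fun x => f x - g x) a b = RInt f a b - RInt g a b.
Proof. intros. apply (RInt_minus f g); apply cont_R_RInt; auto. Qed.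

Lemma RInt_plus_cont f g a b : cont_R f -> cont_R g ->
  RInt (fun x => f x + g x) a b = RInt f a b + RInt g a b.
Proof. intros. apply (RInt_plus f g); apply cont_R_RInt; auto. Qed.

Lemma RInt_scal_cont f a b k : cont_R f -> RInt (fun x => k * f x) a b = k * RInt f a b.
Proof. intros. apply (RInt_scal f); apply cont_R_RInt; auto. Qed.

Lemma RInt_Chasles_cont f a b c : cont_R f -> RInt f a b + RInt f b c = RInt f a c.
Proof. intros. apply (RInt_Chasles f); apply cont_R_RInt; auto. Qed.

Lemma RInt_le_cont f g a b : a <= b -> cont_R f -> cont_R g ->
  (forall x, a <= x <= b -> f x <= g x) -> RInt f a b <= RInt g a b.
Proof. intros. apply RInt_le; auto; try apply cont_R_RInt; auto. intros; apply H2; lra. Qed.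

Lemma RInt_sum_cont (g : nat -> R -> R) N y z : (forall n, cont_R (g n)) ->
  RInt (fun x => sum_f_R0 (fun n => g n x) N) y z = sum_f_R0 (fun n => RInt (g n) y z) N.
Proof.
intros H. induction N; simpl; [reflexivity|].
rewrite RInt_plus_cont, IHN; auto. apply cont_R_sum; auto.
Qed.

Definition avg (h : R -> R) (s : R) : R := if Req_EM_T s 0 then h 0 else RInt h 0 s / s.

Lemma avg_mul h s : s <> 0 -> avg h s * s = RInt h 0 s.
Proof. intros H. unfold avg. destruct Req_EM_T; [congruence|]. field; auto. Qed.

Lemma avg_cont0 h : cont_R h -> continuity_pt (avg h) 0.
Proof.
intros Hc. apply continuity_pt_intro. intros eps He.
destruct (continuity_pt_elim h 0 (Hc 0) (eps/2)) as [d [Hd H]]; [lra|].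
exists d; split; auto. intros y Hy. unfold avg.
destruct (Req_EM_T 0 0); [|congruence].
destruct (Req_EM_T y 0) as [->|Hy0]; [rewrite Rminus_diag, Rabs_R0; auto|].
replace (RInt h 0 y / y - h 0) with (RInt (fun t => h t - h 0) 0 y / y).
2:{ rewrite RInt_minus_cont, RInt_const_mul; [field; auto | auto | apply cont_R_const]. }
rewrite Rabs_div by auto.
apply (Rle_lt_trans _ (eps/2)); [|lra].
apply (Rmult_le_reg_r (Rabs y)); [apply Rabs_pos_lt; auto|].
unfold Rdiv. rewrite Rmult_assoc, Rinv_l, Rmult_1_r by (apply Rabs_no_R0; auto).
rewrite Rmult_comm. replace (Rabs y) with (Rabs (y - 0)) by (f_equal; ring).
apply abs_RInt_le_bound; [apply cont_R_RInt, cont_R_minus; auto; apply cont_R_const|].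
intros t Ht. left; apply H. rewrite Rminus_0_r in Hy.
unfold Rmin, Rmax in Ht; destruct Rle_dec; unfold Rabs in *; repeat destruct Rcase_abs; lra.
Qed.

Lemma avg_cont h : cont_R h -> cont_R (avg h).
Proof.
intros Hc s. destruct (Req_dec s 0) as [->|Hs]; [apply avg_cont0; auto|].
assert (Hg : continuity_pt (fun y => RInt h 0 y / y) s).
{ apply continuity_pt_div; auto; [apply cont_R_RInt_upper; auto | apply continuity_pt_id]. }
apply continuity_pt_intro. intros eps He.
destruct (continuity_pt_elim _ _ Hg eps He) as [d [Hd H]].
exists (Rmin d (Rabs s)). split; [apply Rmin_pos; auto; apply Rabs_pos_lt; auto|].
intros y Hy. unfold avg. destruct (Req_EM_T s 0); [congruence|].
destruct (Req_EM_T y 0) as [->|Hy0].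
- exfalso. assert (Rabs (0 - s) < Rabs s) by (eapply Rlt_le_trans; [exact Hy | apply Rmin_r]).
  rewrite Rminus_0_l, Rabs_Ropp in H0. lra.
- apply H. eapply Rlt_le_trans; [exact Hy | apply Rmin_l].
Qed.

Lemma avg_bound h s M : cont_R h -> 0 <= s ->
  (forall t, 0 <= t <= s -> 0 <= h t <= M) -> 0 <= avg h s <= M.
Proof.
intros Hc Hs H. unfold avg. destruct Req_EM_T as [->|n]; [apply H; lra|].
assert (0 <= RInt h 0 s <= s * M).
{ split.
  - apply RInt_ge_0; [lra | apply cont_R_RInt; auto | intros; apply H; lra].
  - eapply Rle_trans; [apply Rle_abs|]. replace (s * M) with ((s - 0) * M) by ring.
    apply abs_RInt_le_const; [lra | apply cont_R_RInt; auto|].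
    intros t Ht. specialize (H t Ht). rewrite Rabs_right; lra. }
split; [apply Rdiv_le_0_compat; lra|].
apply (Rmult_le_reg_r s); [lra|]. unfold Rdiv. rewrite Rmult_assoc, Rinv_l, Rmult_1_r by lra. lra.
Qed.

Definition expo_term (L : R) (n : nat) (x : R) : R := (L * x) ^ n / INR (Factorial.fact n).

Lemma RInt_expo_term L n x :
  RInt (fun s => L * expo_term L n s) 0 x = expo_term L (S n) x.
Proof.
apply (is_RInt_unique (V:=R_CompleteNormedModule)). unfold expo_term.
replace ((L*x)^(S n) / INR (Factorial.fact (S n)))
  with ((L*x)^(S n) / INR (Factorial.fact (S n)) - (L*0)^(S n) / INR (Factorial.fact (S n)))
  by (simpl; rewrite Rmult_0_r, Rmult_0_l; unfold Rdiv; ring).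
apply (is_RInt_derive (V:=R_CompleteNormedModule) (fun s => (L*s)^(S n) / INR (Factorial.fact (S n)))).
- intros t _. auto_derive; auto.
  change (match n with 0%nat => 1 | S _ => INR n + 1 end) with (INR (S n)).
  rewrite S_INR, plus_INR, mult_INR. field.
  pose proof (INR_fact_lt_0 n). pose proof (pos_INR n). split; nra.
- intros t _. apply continuity_pt_continuous. unfold Rdiv.
  apply cont_R_mult; [apply cont_R_const | apply cont_R_mult; [apply cont_R_pow | apply cont_R_const]].
Qed.

Section PhiFromPsi.
Variables (psi dpsi : R -> R).
Hypothesis psi_deriv : forall x, in01 x -> has_deriv_within in01 psi dpsi x.
Hypothesis psi0 : psi 0 = 0.
Hypothesis psi_pos : forall z, 0 < z < 1 -> 0 < psi z <= psi 1.

(* Since psi 0 = 0, the quotient psi y / y tends to dpsi 0 at 0+. *)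
Lemma psi_quot_lim0 eps : 0 < eps -> exists del, 0 < del /\
  forall y, 0 < y <= 1 -> y < del -> Rabs (psi y / y - dpsi 0) < eps.
Proof.
intros He. destruct (limit1_in_elim _ _ _ _ (psi_deriv 0 ltac:(unfold in01; lra)) eps He) as [d [Hd H]].
exists d; split; auto. intros y Hy Hyd. specialize (H y). rewrite psi0, !Rminus_0_r in H.
apply H; [split; [unfold in01|]; lra | rewrite Rabs_right; lra].
Qed.

Lemma psi_cont01 r : 0 <= r <= 1 -> forall eps, 0 < eps -> exists del, 0 < del /\
  forall y, 0 <= y <= 1 -> Rabs (y - r) < del -> Rabs (psi y - psi r) < eps.
Proof.
intros Hr eps He. destruct (limit1_in_elim _ _ _ _ (psi_deriv r Hr) 1 Rlt_0_1) as [d [Hd H]].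
set (K := Rabs (dpsi r) + 1). assert (HK : 0 < K) by (unfold K; pose proof (Rabs_pos (dpsi r)); lra).
exists (Rmin d (eps / K)). split; [apply Rmin_pos; auto; apply Rdiv_lt_0_compat; lra|].
intros y Hy Hyr. destruct (Req_dec y r) as [->|Hyr0]; [rewrite Rminus_diag, Rabs_R0; auto|].
assert (H1 : Rabs (y - r) < d) by (eapply Rlt_le_trans; [exact Hyr | apply Rmin_l]).
assert (H2 : Rabs (y - r) < eps / K) by (eapply Rlt_le_trans; [exact Hyr | apply Rmin_r]).
specialize (H y (conj Hy Hyr0) H1).
assert (Hq : Rabs ((psi y - psi r) / (y - r)) <= K).
{ unfold K. replace ((psi y - psi r) / (y - r)) with (((psi y - psi r) / (y - r) - dpsi r) + dpsi r) by ring.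
  eapply Rle_trans; [apply Rabs_triang | lra]. }
replace (psi y - psi r) with ((psi y - psi r) / (y - r) * (y - r)) by (field; lra).
rewrite Rabs_mult. apply Rle_lt_trans with (K * Rabs (y - r)); [apply Rmult_le_compat_r; auto; apply Rabs_pos|].
apply (Rmult_lt_compat_l K) in H2; auto. replace (K * (eps / K)) with eps in H2 by (field; lra). auto.
Qed.

Definition phi : R -> R := quot_ext psi (dpsi 0).

Lemma phi_cont : cont_R phi.
Proof. intros r. apply quot_ext_cont; [apply psi_quot_lim0 | apply psi_cont01]. Qed.

Lemma phi_spec r : 0 < r <= 1 -> r * phi r = psi r.
Proof. apply quot_ext_spec. Qed.

Lemma psi1_pos : 0 < psi 1.
Proof. destruct (psi_pos (1/2)); lra. Qed.

Lemma dpsi0_nonneg : 0 <= dpsi 0.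
Proof.
destruct (Rle_dec 0 (dpsi 0)) as [|Hneg]; auto. exfalso.
destruct (psi_quot_lim0 (- dpsi 0)) as [d [Hd H]]; [lra|].
set (y := Rmin (d/2) (1/2)). assert (0 < y) by (apply Rmin_pos; lra).
assert (y <= 1/2) by apply Rmin_r. assert (y <= d/2) by apply Rmin_l.
specialize (H y ltac:(lra) ltac:(lra)). destruct (psi_pos y) as [hp _]; [lra|].
assert (0 < psi y / y) by (apply Rdiv_lt_0_compat; lra).
unfold Rabs in H; destruct Rcase_abs; lra.
Qed.

Lemma phi_nonneg r : 0 <= phi r.
Proof.
unfold phi, quot_ext, quot_on01. destruct (clamp01_in r).
destruct Rle_dec; [apply dpsi0_nonneg|].
destruct (Req_dec (clamp01 r) 1) as [->|]; [pose proof psi1_pos; unfold Rdiv; rewrite Rinv_1; lra|].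
left. apply Rdiv_lt_0_compat; [apply psi_pos|]; lra.
Qed.

Lemma phi_pos r : 0 < r < 1 -> 0 < phi r.
Proof.
intros Hr. unfold phi, quot_ext, quot_on01. rewrite clamp01_id by lra.
destruct Rle_dec; [lra|]. apply Rdiv_lt_0_compat; [apply psi_pos|]; lra.
Qed.

(* phi is constant outside [0,1], so its maximum on [0,1] bounds it. *)
Lemma phi_bounded : exists L, forall r, 0 <= phi r <= L.
Proof.
destruct (continuity_ab_maj phi 0 1 ltac:(lra) (fun x _ => phi_cont x)) as [Mx [HM _]].
exists (phi Mx). intros r. split; [apply phi_nonneg|].
unfold phi. rewrite quot_ext_clamp. apply HM, clamp01_in.
Qed.

End PhiFromPsi.

(** The coefficient functions of the distinguished solution, expanded in
    powers of [lam = (s/gm)^2]:  [a_0 = 1],  [a_(n+1) z = int_0^z avg (ph a_n)]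
    and [v_n z = int_0^z ph a_n]. *)
Section IteratedIntegrals.
Variables (ph : R -> R) (L : R).
Hypothesis ph_cont : cont_R ph.
Hypothesis ph_bound : forall r, 0 <= ph r <= L.

Fixpoint acoef (n : nat) : R -> R :=
  match n with
  | O => fun _ => 1
  | S m => fun x => RInt (avg (fun r => ph r * acoef m r)) 0 x
  end.
Definition wcoef (n : nat) : R -> R := avg (fun r => ph r * acoef n r).
Definition vcoef (n : nat) (x : R) : R := RInt (fun r => ph r * acoef n r) 0 x.

Lemma acoef_cont n : cont_R (acoef n).
Proof.
induction n; [apply cont_R_const|].
apply cont_R_RInt_upper, avg_cont, cont_R_mult; auto.
Qed.

Lemma ph_acoef_cont n : cont_R (fun r => ph r * acoef n r).
Proof. apply cont_R_mult; auto. apply acoef_cont. Qed.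

Lemma wcoef_cont n : cont_R (wcoef n).
Proof. apply avg_cont, ph_acoef_cont. Qed.

Lemma acoef_S0 n : acoef (S n) 0 = 0.
Proof. apply (RInt_point (V:=R_CompleteNormedModule)). Qed.

Lemma vcoef_0 n : vcoef n 0 = 0.
Proof. apply (RInt_point (V:=R_CompleteNormedModule)). Qed.

Lemma vcoef_wcoef n x : x <> 0 -> wcoef n x * x = vcoef n x.
Proof. apply avg_mul. Qed.

Lemma L_nonneg : 0 <= L.
Proof. destruct (ph_bound 0); lra. Qed.

Lemma expo_term_mono n x y : 0 <= x <= y -> expo_term L n x <= expo_term L n y.
Proof.
intros. unfold expo_term, Rdiv. apply Rmult_le_compat_r.
- left; apply Rinv_0_lt_compat, INR_fact_lt_0.
- pose proof L_nonneg. apply pow_incr. split; [apply Rmult_le_pos | apply Rmult_le_compat_l]; lra.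
Qed.

Lemma acoef_props n : (forall x, 0 <= x -> 0 <= acoef n x <= expo_term L n x) /\
  (forall x y, 0 <= x <= y -> acoef n x <= acoef n y).
Proof.
induction n as [|n [IHb IHm]].
- split; intros; unfold expo_term; simpl; lra.
- assert (Hw : forall s, 0 <= s -> 0 <= wcoef n s <= L * expo_term L n s).
  { intros s Hs. apply avg_bound; [apply ph_acoef_cont | auto|].
    intros t Ht. destruct (IHb t) as [h1 h2]; [lra|]. destruct (ph_bound t).
    split; [apply Rmult_le_pos; auto|].
    apply Rmult_le_compat; auto. eapply Rle_trans; [exact h2 | apply expo_term_mono; lra]. }
  split.
  + intros x Hx. simpl. split.
    * apply RInt_ge_0; auto; [apply cont_R_RInt, wcoef_cont | intros; apply Hw; lra].
    * rewrite <- RInt_expo_term. apply RInt_le_cont; auto; [apply wcoef_cont| |].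
      -- unfold expo_term, Rdiv. apply cont_R_mult; [apply cont_R_const|].
         apply cont_R_mult; [apply cont_R_pow | apply cont_R_const].
      -- intros t Ht. apply Hw. lra.
  + intros x y Hxy. change (RInt (wcoef n) 0 x <= RInt (wcoef n) 0 y).
    rewrite <- (RInt_Chasles_cont (wcoef n) 0 x y) by apply wcoef_cont.
    assert (0 <= RInt (wcoef n) x y); [|lra].
    apply RInt_ge_0; [lra | apply cont_R_RInt, wcoef_cont | intros; apply Hw; lra].
Qed.

Lemma acoef_nonneg n x : 0 <= x -> 0 <= acoef n x.
Proof. intros. apply (acoef_props n). auto. Qed.

Lemma acoef_le n x : 0 <= x -> acoef n x <= expo_term L n x.
Proof. intros. apply (acoef_props n). auto. Qed.

Lemma acoef_mono n x y : 0 <= x <= y -> acoef n x <= acoef n y.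
Proof. intros. apply (acoef_props n). auto. Qed.

Lemma wcoef_bound n s : 0 <= s -> 0 <= wcoef n s <= L * expo_term L n s.
Proof.
intros Hs. apply avg_bound; [apply ph_acoef_cont | auto|]. intros t Ht.
destruct (ph_bound t). pose proof (acoef_nonneg n t ltac:(lra)).
split; [apply Rmult_le_pos; auto|]. apply Rmult_le_compat; auto.
eapply Rle_trans; [apply acoef_le; lra | apply expo_term_mono; lra].
Qed.

Lemma vcoef_bound n x : 0 <= x -> 0 <= vcoef n x <= x * L * acoef n x.
Proof.
intros Hx. unfold vcoef. split.
- apply RInt_ge_0; auto; [apply cont_R_RInt, ph_acoef_cont|].
  intros t Ht. apply Rmult_le_pos; [apply ph_bound | apply acoef_nonneg; lra].
- eapply Rle_trans; [apply Rle_abs|].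
  replace (x * L * acoef n x) with ((x - 0) * (L * acoef n x)) by ring.
  apply abs_RInt_le_const; auto; [apply cont_R_RInt, ph_acoef_cont|].
  intros t Ht. destruct (ph_bound t). pose proof (acoef_nonneg n t ltac:(lra)).
  rewrite Rabs_right by (apply Rle_ge, Rmult_le_pos; auto).
  apply Rmult_le_compat; auto. apply acoef_mono; lra.
Qed.

(* Since a_n is nondecreasing, v_n 1 <= a_n 1 * int_0^1 ph. *)
Lemma vcoef_at1 n : vcoef n 1 <= acoef n 1 * vcoef 0 1.
Proof.
unfold vcoef. simpl. rewrite <- RInt_scal_cont by (apply cont_R_mult; auto; apply cont_R_const).
apply RInt_le_cont; [lra | apply ph_acoef_cont | |].
- apply cont_R_mult; [apply cont_R_const | apply cont_R_mult; auto; apply cont_R_const].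
- intros t Ht. rewrite Rmult_1_r, (Rmult_comm (acoef n 1)).
  apply Rmult_le_compat_l; [apply ph_bound | apply acoef_mono; lra].
Qed.

End IteratedIntegrals.

Lemma is_series_zero : is_series (fun _ : nat => 0) 0.
Proof.
apply is_series_Reals. intros e He. exists 0%nat. intros n _. unfold R_dist.
replace (sum_f_R0 (fun _ => 0) n) with 0; [rewrite Rminus_0_r, Rabs_R0; auto|].
induction n; simpl; lra.
Qed.

Lemma Series_nonneg (a : nat -> R) : (forall n, 0 <= a n) -> ex_series a -> 0 <= Series a.
Proof.
intros H He. rewrite <- (is_series_unique _ _ is_series_zero).
apply Series_le; auto. intros; split; auto; lra.
Qed.

Lemma Series_tail (a : nat -> R) N : ex_series a ->
  Series a - sum_f_R0 a N = Series (fun k => a (S N + k)%nat).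
Proof. intros H. rewrite (Series_incr_n a (S N)) by (auto; lia). simpl pred. ring. Qed.

Lemma term_le_Series (b : nat -> R) n : (forall k, 0 <= b k) -> ex_series b -> b n <= Series b.
Proof.
intros H He. rewrite (Series_incr_n b (S n)) by (auto; lia). simpl pred.
assert (b n <= sum_f_R0 b n) by (destruct n; simpl; [lra | pose proof (cond_pos_sum b n H); lra]).
assert (0 <= Series (fun k => b (S n + k)%nat)); [|lra].
apply Series_nonneg; auto. apply (ex_series_incr_n b (S n)); auto.
Qed.

Lemma PSeries_as_Series c x : PSeries c x = Series (fun n => x ^ n * c n).
Proof. unfold PSeries. apply Series_ext. intros; rewrite Rmult_comm; reflexivity. Qed.

Lemma ex_series_expo y : ex_series (fun n => y ^ n / INR (Factorial.fact n)).
Proof. eexists. apply (is_exp_Reals y). Qed.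

Lemma expo_le_exp y n : 0 <= y -> y ^ n / INR (Factorial.fact n) <= exp y.
Proof.
intros Hy. rewrite exp_Reals, PSeries_as_Series.
apply (term_le_Series (fun k => y ^ k * / INR (Factorial.fact k))); [|apply ex_series_expo].
intros k. apply Rmult_le_pos; [apply pow_le; auto | left; apply Rinv_0_lt_compat, INR_fact_lt_0].
Qed.

Lemma CV_radius_infinite_expo (c : nat -> R) K L : 0 <= L ->
  (forall n, Rabs (c n) <= K * (L ^ n / INR (Factorial.fact n))) ->
  forall x, Rbar_lt (Rabs x) (CV_radius c).
Proof.
intros HL H x. set (r := Rabs x + 1).
assert (Hr0 : 0 <= r) by (unfold r; pose proof (Rabs_pos x); lra).
assert (HK : 0 <= K).
{ specialize (H 0%nat). simpl in H. pose proof (Rabs_pos (c 0%nat)).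
  replace (1 / 1) with 1 in H by field. lra. }
assert (Hr : Rbar_le r (CV_radius c)).
{ apply (proj1 (CV_radius_bounded c)). exists (K * exp (L * r)). intros n.
  rewrite Rabs_mult, (Rabs_right (r ^ n)) by (apply Rle_ge, pow_le; auto).
  apply Rle_trans with (K * (L ^ n / INR (Factorial.fact n)) * r ^ n).
  - apply Rmult_le_compat_r; [apply pow_le|]; auto.
  - replace (K * (L ^ n / INR (Factorial.fact n)) * r ^ n)
      with (K * ((L * r) ^ n / INR (Factorial.fact n))) by (rewrite Rpow_mult_distr; unfold Rdiv; ring).
    apply Rmult_le_compat_l, expo_le_exp; auto. apply Rmult_le_pos; auto. }
destruct (CV_radius c); simpl in *; auto. unfold r in Hr. lra.
Qed.

Lemma PSeries_expo_cont (c : nat -> R) K L : 0 <= L ->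
  (forall n, Rabs (c n) <= K * (L ^ n / INR (Factorial.fact n))) -> cont_R (PSeries c).
Proof. intros HL H x. apply PSeries_continuity, (CV_radius_infinite_expo c K L HL H). Qed.

Section TermwiseDerivative.
Variables (f g : nat -> R -> R) (M : nat -> R) (lo hi : R).
Hypothesis lo_hi : lo < hi.
Hypothesis M_summable : ex_series M.
Hypothesis g_dominated : forall n x, lo <= x <= hi -> Rabs (g n x) <= M n.
Hypothesis g_cont : forall n, cont_R (g n).
Hypothesis f_primitive : forall n x y, lo <= x <= hi -> lo <= y <= hi ->
  f n y - f n x = RInt (g n) x y.
Hypothesis f_summable_somewhere : exists c, lo <= c <= hi /\ ex_series (fun n => f n c).

Definition Gsum (x : R) : R := Series (fun n => g n x).
Definition Fsum (x : R) : R := Series (fun n => f n x).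

Lemma g_abs_summable x : lo <= x <= hi -> ex_series (fun n => Rabs (g n x)).
Proof.
intros Hx. apply (ex_series_le (K:=R_AbsRing) (V:=R_CompleteNormedModule) _ M); auto.
intros n. change (Rabs (Rabs (g n x)) <= M n). rewrite Rabs_Rabsolu. apply g_dominated; auto.
Qed.

Lemma g_summable x : lo <= x <= hi -> ex_series (fun n => g n x).
Proof. intros Hx. apply ex_series_Rabs, g_abs_summable; auto. Qed.

Lemma Gsum_tail x N : lo <= x <= hi ->
  Rabs (Gsum x - sum_f_R0 (fun n => g n x) N) <= Series M - sum_f_R0 M N.
Proof.
intros Hx. unfold Gsum. rewrite !Series_tail; auto; [|apply g_summable; auto].
assert (E1 : ex_series (fun k => Rabs (g (S N + k)%nat x)))
  by (apply (ex_series_incr_n (fun n => Rabs (g n x)) (S N)), g_abs_summable; auto).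
eapply Rle_trans; [apply (Series_Rabs _ E1)|].
apply Series_le; [|apply (ex_series_incr_n M (S N)); auto].
intros n. split; [apply Rabs_pos | apply g_dominated; auto].
Qed.

Lemma M_tail_small eps : 0 < eps -> exists N, forall n, (N <= n)%nat -> Series M - sum_f_R0 M n < eps.
Proof.
intros He. pose proof (Series_correct _ M_summable) as H. apply is_series_Reals in H.
destruct (H eps He) as [N HN]. exists N. intros n Hn. specialize (HN n Hn). unfold R_dist in HN.
unfold Rabs in HN; destruct Rcase_abs; lra.
Qed.

Lemma M_tail_nonneg n : 0 <= Series M - sum_f_R0 M n.
Proof. eapply Rle_trans; [apply Rabs_pos | apply (Gsum_tail lo n); lra]. Qed.

Lemma Gsum_cont x : lo < x < hi -> continuity_pt Gsum x.
Proof.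
intros Hx. apply continuity_pt_intro. intros eps He.
destruct (M_tail_small (eps/3)) as [N HN]; [lra|]. specialize (HN N (le_n N)).
destruct (continuity_pt_elim _ x (cont_R_sum g N g_cont x) (eps/3)) as [d [Hd H]]; [lra|].
exists (Rmin d (Rmin (x - lo) (hi - x))). split; [repeat apply Rmin_pos; lra|].
intros y Hy.
assert (Hy1 : Rabs (y - x) < d) by (eapply Rlt_le_trans; [exact Hy | apply Rmin_l]).
assert (Hy2 : Rabs (y - x) < Rmin (x - lo) (hi - x)) by (eapply Rlt_le_trans; [exact Hy | apply Rmin_r]).
assert (Hy3 : lo <= y <= hi)
  by (unfold Rmin in Hy2; destruct Rle_dec; unfold Rabs in Hy2; destruct Rcase_abs; lra).
specialize (H y Hy1). pose proof (Gsum_tail y N Hy3). pose proof (Gsum_tail x N ltac:(lra)).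
set (Sy := sum_f_R0 (fun n => g n y) N) in *. set (Sx := sum_f_R0 (fun n => g n x) N) in *.
replace (Gsum y - Gsum x) with ((Gsum y - Sy) + (Sy - Sx) - (Gsum x - Sx)) by ring.
unfold Rabs in *; repeat destruct Rcase_abs; lra.
Qed.

Lemma Gsum_ex_RInt y z : lo < y < hi -> lo < z < hi -> ex_RInt Gsum y z.
Proof.
intros Hy Hz. apply (ex_RInt_continuous (V:=R_CompleteNormedModule)). intros t Ht.
apply continuity_pt_continuous, Gsum_cont. unfold Rmin, Rmax in Ht; destruct Rle_dec; lra.
Qed.

Lemma RInt_sum_g y z : lo < y < hi -> lo < z < hi ->
  is_series (fun n => RInt (g n) y z) (RInt Gsum y z).
Proof.
intros Hy Hz. apply is_series_Reals. intros eps He.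
pose proof (Rabs_pos (z - y)).
destruct (M_tail_small (eps / (Rabs (z - y) + 1))) as [N HN]; [apply Rdiv_lt_0_compat; lra|].
exists N. intros n Hn. unfold R_dist. rewrite <- RInt_sum_cont by auto.
assert (Hex : ex_RInt (fun x => sum_f_R0 (fun k => g k x) n) y z) by (apply cont_R_RInt, cont_R_sum; auto).
rewrite <- (RInt_minus (V:=R_CompleteNormedModule)); [|auto | apply Gsum_ex_RInt; auto].
eapply Rle_lt_trans.
{ apply abs_RInt_le_bound with (M := Series M - sum_f_R0 M n).
  - apply (ex_RInt_minus (V:=R_CompleteNormedModule)); auto. apply Gsum_ex_RInt; auto.
  - intros t Ht. change (Rabs (sum_f_R0 (fun k => g k t) n - Gsum t) <= Series M - sum_f_R0 M n).
    rewrite Rabs_minus_sym. apply Gsum_tail. unfold Rmin, Rmax in Ht; destruct Rle_dec; lra. }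
specialize (HN n Hn). pose proof (M_tail_nonneg n).
apply Rle_lt_trans with ((Rabs (z - y) + 1) * (Series M - sum_f_R0 M n)); [nra|].
apply (Rmult_lt_compat_l (Rabs (z - y) + 1)) in HN; [|lra].
replace ((Rabs (z - y) + 1) * (eps / (Rabs (z - y) + 1))) with eps in HN by (field; lra). lra.
Qed.

Lemma f_summable x : lo <= x <= hi -> ex_series (fun n => f n x).
Proof.
intros Hx. destruct f_summable_somewhere as [c [Hc Hs]].
apply (ex_series_ext (fun n => plus (f n c) (RInt (g n) c x))).
{ intros n. rewrite <- f_primitive; auto. unfold plus; simpl. ring. }
apply (ex_series_plus (K:=R_AbsRing) (V:=R_NormedModule)); auto.
apply (ex_series_le (K:=R_AbsRing) (V:=R_CompleteNormedModule) _ (fun n => Rabs (x - c) * M n)).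
- intros n. change (Rabs (RInt (g n) c x) <= Rabs (x - c) * M n).
  apply abs_RInt_le_bound; [apply cont_R_RInt; auto|].
  intros t Ht. apply g_dominated. unfold Rmin, Rmax in Ht; destruct Rle_dec; lra.
- apply (ex_series_scal_l (K:=R_AbsRing) (V:=R_NormedModule)); auto.
Qed.

Lemma Fsum_increment y z : lo < y < hi -> lo < z < hi -> Fsum z - Fsum y = RInt Gsum y z.
Proof.
intros Hy Hz. unfold Fsum. rewrite <- Series_minus by (apply f_summable; lra).
rewrite (Series_ext _ (fun n => RInt (g n) y z)); [apply is_series_unique, RInt_sum_g; auto|].
intros n. apply f_primitive; lra.
Qed.

Lemma Fsum_derive x : lo < x < hi -> is_derive Fsum x (Gsum x).
Proof.
intros Hx. set (d := Rmin (x - lo) (hi - x)). assert (Hd : 0 < d) by (apply Rmin_pos; lra).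
assert (Hin : forall y, Rabs (y - x) < d -> lo < y < hi)
  by (intros y Hy; unfold d, Rmin in Hy; destruct Rle_dec; unfold Rabs in Hy; destruct Rcase_abs; lra).
apply (is_derive_ext_loc (fun y => Fsum x + RInt Gsum x y)).
{ exists (mkposreal d Hd). intros y Hy. change (Rabs (y - x) < d) in Hy.
  change (@eq R (Fsum x + RInt Gsum x y) (Fsum y)). rewrite <- Fsum_increment; auto. ring. }
apply is_derive_Reals. replace (Gsum x) with (0 + Gsum x) by ring.
apply derivable_pt_lim_plus; [apply derivable_pt_lim_const|]. apply is_derive_Reals.
apply (is_derive_RInt Gsum (fun y => RInt Gsum x y) x x).
- exists (mkposreal d Hd). intros y Hy. change (Rabs (y - x) < d) in Hy.
  apply (RInt_correct (V:=R_CompleteNormedModule)), Gsum_ex_RInt; auto.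
- apply continuity_pt_continuous, Gsum_cont; auto.
Qed.

End TermwiseDerivative.

(** On (0,2) they satisfy [Cser' = lam * Vser / z] and
    [Vser' = ph * Cser]: in the variable [z], this is the Cauchy problem. *)
Section LambdaSeries.
Variables (ph : R -> R) (L : R).
Hypothesis ph_cont : cont_R ph.
Hypothesis ph_bound : forall r, 0 <= ph r <= L.
Variable lam : R.
Hypothesis lam_nonneg : 0 <= lam.

Definition Cser (x : R) : R := PSeries (fun n => acoef ph n x) lam.
Definition Vser (x : R) : R := PSeries (fun n => vcoef ph n x) lam.

Let fC (m : nat) (x : R) : R := lam ^ (S m) * acoef ph (S m) x.
Let gC (m : nat) (x : R) : R := lam ^ (S m) * wcoef ph m x.
Let MC (m : nat) : R := lam * L * ((2 * lam * L) ^ m / INR (Factorial.fact m)).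
Let fV (m : nat) (x : R) : R := lam ^ m * vcoef ph m x.
Let gV (m : nat) (x : R) : R := lam ^ m * (ph x * acoef ph m x).
Let MV (m : nat) : R := L * ((2 * lam * L) ^ m / INR (Factorial.fact m)).

Let lam_expo_le n x : 0 <= x <= 2 ->
  lam ^ n * expo_term L n x <= (2 * lam * L) ^ n / INR (Factorial.fact n).
Proof.
intros Hx.
replace ((2 * lam * L) ^ n / INR (Factorial.fact n)) with (lam ^ n * expo_term L n 2)
  by (unfold expo_term, Rdiv; rewrite <- Rmult_assoc, <- Rpow_mult_distr; f_equal; f_equal; ring).
apply Rmult_le_compat_l; [apply pow_le; auto | apply (expo_term_mono ph L ph_bound); lra].
Qed.

Let MC_summable : ex_series MC.
Proof. apply (ex_series_scal_l (K:=R_AbsRing) (V:=R_NormedModule)), ex_series_expo. Qed.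

Let MV_summable : ex_series MV.
Proof. apply (ex_series_scal_l (K:=R_AbsRing) (V:=R_NormedModule)), ex_series_expo. Qed.

Let gC_dominated n x : 0 <= x <= 2 -> Rabs (gC n x) <= MC n.
Proof.
intros Hx. unfold gC, MC. pose proof (L_nonneg ph L ph_bound).
destruct (wcoef_bound ph L ph_cont ph_bound n x) as [h1 h2]; [lra|].
pose proof (pow_le lam n lam_nonneg).
rewrite Rabs_right by (apply Rle_ge, Rmult_le_pos; auto; apply pow_le; auto).
simpl. rewrite Rmult_assoc, (Rmult_assoc lam L). apply Rmult_le_compat_l; auto.
apply Rle_trans with (L * (lam ^ n * expo_term L n x)); [nra|].
apply Rmult_le_compat_l, lam_expo_le; auto.
Qed.

Let gV_dominated n x : 0 <= x <= 2 -> Rabs (gV n x) <= MV n.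
Proof.
intros Hx. unfold gV, MV.
pose proof (acoef_nonneg ph L ph_cont ph_bound n x ltac:(lra)).
pose proof (acoef_le ph L ph_cont ph_bound n x ltac:(lra)).
pose proof (pow_le lam n lam_nonneg). pose proof (L_nonneg ph L ph_bound). destruct (ph_bound x).
rewrite Rabs_right by (apply Rle_ge, Rmult_le_pos; [auto | apply Rmult_le_pos; auto]).
apply Rle_trans with (L * (lam ^ n * expo_term L n x)); [|apply Rmult_le_compat_l, lam_expo_le; auto].
replace (L * (lam ^ n * expo_term L n x)) with (lam ^ n * (L * expo_term L n x)) by ring.
apply Rmult_le_compat_l; auto. apply Rmult_le_compat; auto.
Qed.

Let gC_cont n : cont_R (gC n).
Proof. apply cont_R_mult; [apply cont_R_const | apply wcoef_cont; auto]. Qed.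

Let gV_cont n : cont_R (gV n).
Proof. apply cont_R_mult; [apply cont_R_const | apply ph_acoef_cont; auto]. Qed.

Let fC_primitive n x y : 0 <= x <= 2 -> 0 <= y <= 2 -> fC n y - fC n x = RInt (gC n) x y.
Proof.
intros. unfold fC, gC. rewrite RInt_scal_cont by (apply wcoef_cont; auto). simpl acoef.
change (lam ^ S n * RInt (wcoef ph n) 0 y - lam ^ S n * RInt (wcoef ph n) 0 x
  = lam ^ S n * RInt (wcoef ph n) x y).
rewrite <- (RInt_Chasles_cont (wcoef ph n) 0 x y) by (apply wcoef_cont; auto). ring.
Qed.

Let fV_primitive n x y : 0 <= x <= 2 -> 0 <= y <= 2 -> fV n y - fV n x = RInt (gV n) x y.
Proof.
intros. unfold fV, gV, vcoef. rewrite RInt_scal_cont by (apply ph_acoef_cont; auto).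
rewrite <- (RInt_Chasles_cont (fun r => ph r * acoef ph n r) 0 x y) by (apply ph_acoef_cont; auto).
ring.
Qed.

Let fC_summable0 : exists c, 0 <= c <= 2 /\ ex_series (fun n => fC n c).
Proof.
exists 0. split; [lra|]. eexists. eapply is_series_ext; [|apply is_series_zero].
intros n. unfold fC. rewrite acoef_S0, Rmult_0_r. reflexivity.
Qed.

Let fV_summable0 : exists c, 0 <= c <= 2 /\ ex_series (fun n => fV n c).
Proof.
exists 0. split; [lra|]. eexists. eapply is_series_ext; [|apply is_series_zero].
intros n. unfold fV. rewrite vcoef_0, Rmult_0_r. reflexivity.
Qed.

Lemma Cser_summable x : 0 <= x <= 2 -> ex_series (fun n => lam ^ n * acoef ph n x).
Proof.
intros Hx. apply ex_series_incr_1.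
apply (f_summable fC gC MC 0 2 MC_summable gC_dominated gC_cont fC_primitive fC_summable0); lra.
Qed.

Lemma Vser_summable x : 0 <= x <= 2 -> ex_series (fun n => lam ^ n * vcoef ph n x).
Proof.
intros Hx.
apply (f_summable fV gV MV 0 2 MV_summable gV_dominated gV_cont fV_primitive fV_summable0); lra.
Qed.

Lemma Cser_split x : 0 <= x <= 2 -> Cser x = 1 + Fsum fC x.
Proof.
intros Hx. unfold Cser. rewrite PSeries_as_Series, Series_incr_1 by (apply Cser_summable; auto).
unfold Fsum, fC. simpl. ring_simplify. reflexivity.
Qed.

Lemma Cser_derive x : 0 < x < 2 ->
  is_derive Cser x (lam * Series (fun n => lam ^ n * wcoef ph n x)).
Proof.
intros Hx. apply (is_derive_ext_loc (fun y => 1 + Fsum fC y)).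
{ exists (mkposreal (Rmin x (2 - x)) ltac:(apply Rmin_pos; lra)). intros y Hy.
  change (Rabs (y - x) < Rmin x (2 - x)) in Hy.
  change (@eq R (1 + Fsum fC y) (Cser y)). rewrite Cser_split; auto.
  unfold Rmin in Hy; destruct Rle_dec; unfold Rabs in Hy; destruct Rcase_abs; lra. }
replace (lam * Series (fun n => lam ^ n * wcoef ph n x)) with (0 + Gsum gC x).
2:{ unfold Gsum, gC. rewrite <- Series_scal_l. simpl. ring_simplify. apply Series_ext. intros; simpl; ring. }
apply is_derive_Reals, derivable_pt_lim_plus; [apply derivable_pt_lim_const|]. apply is_derive_Reals.
apply (Fsum_derive fC gC MC 0 2 ltac:(lra) MC_summable gC_dominated gC_cont fC_primitive fC_summable0); lra.
Qed.

Lemma Vser_derive x : 0 < x < 2 -> is_derive Vser x (ph x * Cser x).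
Proof.
intros Hx. apply (is_derive_ext_loc (Fsum fV)).
{ exists (mkposreal 1 Rlt_0_1). intros y _. unfold Fsum, Vser, fV. rewrite PSeries_as_Series. reflexivity. }
replace (ph x * Cser x) with (Gsum gV x).
2:{ unfold Gsum, gV, Cser. rewrite PSeries_as_Series, <- Series_scal_l. apply Series_ext. intros; ring. }
apply (Fsum_derive fV gV MV 0 2 ltac:(lra) MV_summable gV_dominated gV_cont fV_primitive fV_summable0); lra.
Qed.

Lemma Series_wcoef_Vser x : 0 < x <= 2 -> Series (fun n => lam ^ n * wcoef ph n x) * x = Vser x.
Proof.
intros Hx. unfold Vser. rewrite PSeries_as_Series, Rmult_comm, <- Series_scal_l.
apply Series_ext. intros n. rewrite <- vcoef_wcoef by lra. ring.
Qed.

Lemma Cser_ge1 x : 0 <= x <= 2 -> 1 <= Cser x.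
Proof.
intros Hx. rewrite Cser_split; auto. assert (0 <= Fsum fC x); [|lra].
apply Series_nonneg.
- intros n. apply Rmult_le_pos; [apply pow_le; auto | apply (acoef_nonneg ph L); auto; lra].
- apply (f_summable fC gC MC 0 2 MC_summable gC_dominated gC_cont fC_primitive fC_summable0); lra.
Qed.

Lemma Cser_mono x y : 0 <= x <= y -> y <= 2 -> Cser x <= Cser y.
Proof.
intros Hxy Hy. unfold Cser. rewrite !PSeries_as_Series.
assert (0 <= Series (fun n => lam ^ n * acoef ph n y) - Series (fun n => lam ^ n * acoef ph n x)); [|lra].
rewrite <- Series_minus by (apply Cser_summable; lra). apply Series_nonneg.
- intros n. rewrite <- Rmult_minus_distr_l. apply Rmult_le_pos; [apply pow_le; auto|].
  pose proof (acoef_mono ph L ph_cont ph_bound n x y Hxy). lra.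
- apply (ex_series_ext (fun n => plus (lam ^ n * acoef ph n y) (opp (lam ^ n * acoef ph n x)))).
  { intros; unfold plus, opp; simpl; ring. }
  apply (ex_series_plus (K:=R_AbsRing) (V:=R_NormedModule)); [apply Cser_summable; lra|].
  apply (ex_series_opp (K:=R_AbsRing) (V:=R_NormedModule)), Cser_summable; lra.
Qed.

Lemma Vser_nonneg x : 0 <= x <= 2 -> 0 <= Vser x.
Proof.
intros Hx. unfold Vser. rewrite PSeries_as_Series. apply Series_nonneg; [|apply Vser_summable; auto].
intros n. apply Rmult_le_pos; [apply pow_le; auto | apply (vcoef_bound ph L); auto; lra].
Qed.

Lemma Vser_small x : 0 <= x <= 1 -> Vser x <= x * L * Cser 1.
Proof.
intros Hx. unfold Vser, Cser. rewrite !PSeries_as_Series, <- Series_scal_l.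
apply Series_le.
- intros n. destruct (vcoef_bound ph L ph_cont ph_bound n x) as [h0 h]; [lra|].
  pose proof (acoef_mono ph L ph_cont ph_bound n x 1 ltac:(lra)). pose proof (pow_le lam n lam_nonneg).
  pose proof (L_nonneg ph L ph_bound).
  split; [apply Rmult_le_pos; auto|].
  replace (x * L * (lam ^ n * acoef ph n 1)) with (lam ^ n * (x * L * acoef ph n 1)) by ring.
  apply Rmult_le_compat_l; auto. eapply Rle_trans; [exact h|].
  apply Rmult_le_compat_l; auto. apply Rmult_le_pos; lra.
- apply (ex_series_scal_l (K:=R_AbsRing) (V:=R_NormedModule)), Cser_summable; lra.
Qed.

Lemma Vser1_le : Vser 1 <= vcoef ph 0 1 * Cser 1.
Proof.
unfold Vser, Cser. rewrite !PSeries_as_Series, <- Series_scal_l. apply Series_le.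
- intros n. pose proof (pow_le lam n lam_nonneg).
  split; [apply Rmult_le_pos; auto; apply (vcoef_bound ph L); auto; lra|].
  replace (vcoef ph 0 1 * (lam ^ n * acoef ph n 1)) with (lam ^ n * (acoef ph n 1 * vcoef ph 0 1)) by ring.
  apply Rmult_le_compat_l; auto. apply (vcoef_at1 ph L); auto.
- apply (ex_series_scal_l (K:=R_AbsRing) (V:=R_NormedModule)), Cser_summable; lra.
Qed.

Lemma Vser1_ge : vcoef ph 0 1 <= Vser 1.
Proof.
unfold Vser. rewrite PSeries_as_Series, Series_incr_1 by (apply Vser_summable; lra). simpl.
assert (0 <= Series (fun k => lam * lam ^ k * vcoef ph (S k) 1)); [|lra].
apply Series_nonneg.
- intros n. apply Rmult_le_pos; [apply Rmult_le_pos; auto; apply pow_le; auto|].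
  apply (vcoef_bound ph L); auto; lra.
- apply (ex_series_incr_1 (fun n => lam ^ n * vcoef ph n 1)), Vser_summable; lra.
Qed.

End LambdaSeries.

Lemma is_derive_plus_R (f g : R -> R) x df dg :
  is_derive f x df -> is_derive g x dg -> is_derive (fun t => f t + g t) x (df + dg).
Proof. apply (is_derive_plus (K:=R_AbsRing) (V:=R_NormedModule)). Qed.

Lemma is_derive_minus_R (f g : R -> R) x df dg :
  is_derive f x df -> is_derive g x dg -> is_derive (fun t => f t - g t) x (df - dg).
Proof. apply (is_derive_minus (K:=R_AbsRing) (V:=R_NormedModule)). Qed.

Lemma is_derive_mult_R (f g : R -> R) x df dg :
  is_derive f x df -> is_derive g x dg -> is_derive (fun t => f t * g t) x (df * g x + f x * dg).
Proof. intros. apply (is_derive_mult f g x df dg); auto. intros; apply Rmult_comm. Qed.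

(** With [kk = s/gm],
    [lam = kk^2] and [E x = exp (gm x / s)] (so [E' = E / kk]), the functions
    [cstar x = Cser (E x)] and [dstar x = kk Vser (E x)] satisfy
    [cstar' = dstar] for [x < xmax = kk ln 2] (where [E x < 2]) and
    [dstar' = psi (E x) cstar] for [x <= 0]; there [cstar >= 1] is
    nondecreasing and [dstar >= 0]. *)
Section DistinguishedSolution.
Variables (psi dpsi : R -> R).
Hypothesis psi_deriv : forall x, in01 x -> has_deriv_within in01 psi dpsi x.
Hypothesis psi0 : psi 0 = 0.
Hypothesis psi_pos : forall z, 0 < z < 1 -> 0 < psi z <= psi 1.
Variable L : R.
Hypothesis phi_bound : forall r, 0 <= phi psi dpsi r <= L.
Variables gm s : R.
Hypothesis gm_pos : 0 < gm.
Hypothesis s_pos : 0 < s.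

Let P : R -> R := phi psi dpsi.
Let P_cont : cont_R P := phi_cont psi dpsi psi_deriv psi0.

Definition kk : R := s / gm.
Definition lam : R := kk * kk.
Definition E (x : R) : R := exp (gm * x / s).
Definition cstar (x : R) : R := Cser P lam (E x).
Definition dstar (x : R) : R := kk * Vser P lam (E x).
Definition xmax : R := kk * ln 2.

Lemma kk_pos : 0 < kk.
Proof. unfold kk; apply Rdiv_lt_0_compat; lra. Qed.

Lemma lam_nonneg : 0 <= lam.
Proof. unfold lam; pose proof kk_pos; nra. Qed.

Lemma xmax_pos : 0 < xmax.
Proof. unfold xmax. apply Rmult_lt_0_compat; [apply kk_pos | rewrite <- ln_1; apply ln_increasing; lra]. Qed.

Lemma E_pos x : 0 < E x.
Proof. apply exp_pos. Qed.

Lemma E_mono x y : x <= y -> E x <= E y.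
Proof.
intros. unfold E. destruct (Req_dec x y) as [->|]; [lra|]. left; apply exp_increasing.
unfold Rdiv. apply Rmult_lt_compat_r; [apply Rinv_0_lt_compat; lra | nra].
Qed.

Lemma E_0 : E 0 = 1.
Proof. unfold E. replace (gm * 0 / s) with 0 by (field; lra). apply exp_0. Qed.

Lemma E_le1 x : x <= 0 -> E x <= 1.
Proof. intros. rewrite <- E_0. apply E_mono; auto. Qed.

Lemma E_lt2 x : x < xmax -> E x < 2.
Proof.
intros H. unfold E. rewrite <- (exp_ln 2) by lra. apply exp_increasing. unfold xmax, kk in H.
apply (Rmult_lt_compat_l (gm / s)) in H; [|apply Rdiv_lt_0_compat; lra].
replace (gm / s * (s / gm * ln 2)) with (ln 2) in H by (field; lra). unfold Rdiv in *. lra.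
Qed.

Lemma E_ln z : 0 < z -> E (kk * ln z) = z.
Proof.
intros. unfold E, kk. replace (gm * (s / gm * ln z) / s) with (ln z) by (field; lra).
apply exp_ln; auto.
Qed.

Lemma E_derive x : is_derive E x (gm / s * E x).
Proof. unfold E. auto_derive; auto. unfold Rdiv. ring. Qed.

Lemma cstar_derive x : x < xmax -> is_derive cstar x (dstar x).
Proof.
intros Hx. pose proof (E_lt2 x Hx). pose proof (E_pos x). unfold cstar.
apply is_derive_eq with (scal (gm / s * E x) (lam * Series (fun n => lam ^ n * wcoef P n (E x)))).
- apply (is_derive_comp (Cser P lam) E x); [|apply E_derive].
  apply (Cser_derive P L P_cont phi_bound lam lam_nonneg). lra.
- unfold scal; simpl; unfold mult; simpl. unfold dstar.
  rewrite <- (Series_wcoef_Vser P lam (E x)) by lra. unfold lam, kk. field. lra.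
Qed.

Lemma dstar_derive x : x <= 0 -> is_derive dstar x (psi (E x) * cstar x).
Proof.
intros Hx. pose proof (E_le1 x Hx). pose proof (E_pos x). unfold dstar.
apply is_derive_eq with (kk * scal (gm / s * E x) (P (E x) * Cser P lam (E x))).
- apply is_derive_scal, (is_derive_comp (Vser P lam) E x); [|apply E_derive].
  apply (Vser_derive P L P_cont phi_bound lam lam_nonneg). lra.
- unfold scal; simpl; unfold mult; simpl. rewrite <- (phi_spec psi dpsi (E x)) by lra.
  unfold cstar, kk, P. field. lra.
Qed.

Lemma cstar_cont x : x < xmax -> continuity_pt cstar x.
Proof. intros. eapply is_derive_continuity_pt, cstar_derive; auto. Qed.

Lemma cstar_ge1 x : x < xmax -> 1 <= cstar x.
Proof.
intros H. unfold cstar. apply (Cser_ge1 P L P_cont phi_bound lam lam_nonneg).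
pose proof (E_pos x). pose proof (E_lt2 x H). lra.
Qed.

Lemma cstar_mono x y : x <= y -> y <= 0 -> cstar x <= cstar y.
Proof.
intros. unfold cstar. pose proof (E_pos x). pose proof (E_mono x y H). pose proof (E_le1 y H0).
apply (Cser_mono P L P_cont phi_bound lam lam_nonneg); lra.
Qed.

Lemma dstar_nonneg x : x <= 0 -> 0 <= dstar x.
Proof.
intros. unfold dstar. pose proof kk_pos. pose proof (E_pos x). pose proof (E_le1 x H).
apply Rmult_le_pos; [lra | apply (Vser_nonneg P L P_cont phi_bound lam lam_nonneg); lra].
Qed.

Definition Aval : R := dstar 0 / cstar 0.

Lemma Aval_pos : 0 < Aval.
Proof.
assert (Hv : 0 < vcoef P 0 1).
{ apply RInt_gt_0; [lra | intros x Hx; simpl; rewrite Rmult_1_r; apply phi_pos; auto|].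
  intros x _. apply continuity_pt_continuous, cont_R_mult; [apply P_cont | apply cont_R_const]. }
pose proof (Vser1_ge P L P_cont phi_bound lam lam_nonneg). pose proof (cstar_ge1 0 xmax_pos).
unfold Aval, dstar. rewrite E_0. apply Rdiv_lt_0_compat; [apply Rmult_lt_0_compat; [apply kk_pos|]|]; lra.
Qed.

Lemma Aval_le_integral : Aval <= kk * vcoef P 0 1.
Proof.
unfold Aval, dstar, cstar. rewrite E_0. pose proof (Vser1_le P L P_cont phi_bound lam lam_nonneg).
pose proof (Cser_ge1 P L P_cont phi_bound lam lam_nonneg 1 ltac:(lra)). pose proof kk_pos.
apply (Rmult_le_reg_r (Cser P lam 1)); [lra|].
unfold Rdiv. rewrite Rmult_assoc, Rinv_l, Rmult_1_r by lra.
rewrite Rmult_assoc. apply Rmult_le_compat_l; lra.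
Qed.

(* The energy dstar^2 - psi(1) cstar^2 is nonincreasing on (-oo,0] since psi <= psi 1. *)
Definition energy (x : R) : R := dstar x * dstar x - psi 1 * (cstar x * cstar x).

Lemma energy_derive t : t <= 0 ->
  is_derive energy t (2 * dstar t * cstar t * (psi (E t) - psi 1)).
Proof.
intros Ht. pose proof xmax_pos.
eapply is_derive_eq.
- apply is_derive_minus_R; [apply is_derive_mult_R; apply dstar_derive; auto|].
  apply (is_derive_scal (fun y => cstar y * cstar y)), is_derive_mult_R; apply cstar_derive; lra.
- ring.
Qed.

Lemma energy_mono x : x <= 0 -> energy 0 <= energy x.
Proof.
intros Hx. destruct (Req_dec x 0) as [->|Hx0]; [lra|].
destruct (MVT_gen energy x 0 (fun t => 2 * dstar t * cstar t * (psi (E t) - psi 1))) as [c [Hc He]].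
- intros t Ht. rewrite Rmin_left, Rmax_right in Ht by lra. apply energy_derive. lra.
- intros t Ht. rewrite Rmin_left, Rmax_right in Ht by lra.
  eapply is_derive_continuity_pt, energy_derive. lra.
- rewrite Rmin_left, Rmax_right in Hc by lra.
  assert (psi (E c) - psi 1 <= 0).
  { pose proof (E_le1 c ltac:(lra)). pose proof (E_pos c).
    destruct (Req_dec (E c) 1) as [->|]; [lra|]. destruct (psi_pos (E c)); lra. }
  pose proof (dstar_nonneg c ltac:(lra)). pose proof (cstar_ge1 c ltac:(pose proof xmax_pos; lra)).
  assert (2 * dstar c * cstar c * (psi (E c) - psi 1) * (0 - x) <= 0); [|lra].
  apply Rmult_le_0_r; [|lra]. apply Rmult_le_0_l; [nra | auto].
Qed.

(* Near -oo (where E x is small), dstar is at most sqrt (psi 1), so the energy is <= 0 there. *)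
Lemma energy_nonpos_somewhere : exists x, x <= 0 /\ energy x <= 0.
Proof.
pose proof (psi1_pos psi psi_pos) as P1. pose proof kk_pos. pose proof (L_nonneg P L phi_bound).
pose proof (sqrt_lt_R0 _ P1) as Hsq. pose proof (sqrt_sqrt (psi 1) ltac:(lra)).
set (C := kk * L * Cser P lam 1).
assert (HC : 0 <= C).
{ pose proof (Cser_ge1 P L P_cont phi_bound lam lam_nonneg 1 ltac:(lra)).
  unfold C. apply Rmult_le_pos; [apply Rmult_le_pos|]; lra. }
set (nu := Rmin 1 (sqrt (psi 1) / (C + 1))).
assert (Hnu : 0 < nu <= 1) by (split; [apply Rmin_pos; [|apply Rdiv_lt_0_compat]; lra | apply Rmin_l]).
assert (Hnu2 : nu * (C + 1) <= sqrt (psi 1)).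
{ assert (nu <= sqrt (psi 1) / (C + 1)) by apply Rmin_r.
  apply (Rmult_le_compat_r (C + 1)) in H2; [|lra].
  replace (sqrt (psi 1) / (C + 1) * (C + 1)) with (sqrt (psi 1)) in H2 by (field; lra). lra. }
exists (kk * ln nu). assert (Hx : kk * ln nu <= 0).
{ assert (ln nu <= 0) by (rewrite <- ln_1; apply ln_le; lra). nra. }
split; auto.
assert (Hd1 : dstar (kk * ln nu) <= sqrt (psi 1)).
{ unfold dstar. rewrite E_ln by lra.
  pose proof (Vser_small P L P_cont phi_bound lam lam_nonneg nu ltac:(lra)).
  apply Rle_trans with (kk * (nu * L * Cser P lam 1)); [apply Rmult_le_compat_l; lra|].
  replace (kk * (nu * L * Cser P lam 1)) with (nu * C) by (unfold C; ring).
  assert (nu * C <= nu * (C + 1)) by (apply Rmult_le_compat_l; lra). lra. }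
pose proof (dstar_nonneg _ Hx). pose proof (cstar_ge1 (kk * ln nu) ltac:(pose proof xmax_pos; lra)).
assert (dstar (kk * ln nu) * dstar (kk * ln nu) <= sqrt (psi 1) * sqrt (psi 1))
  by (apply Rmult_le_compat; lra).
assert (psi 1 <= psi 1 * (cstar (kk * ln nu) * cstar (kk * ln nu)))
  by (rewrite <- (Rmult_1_r (psi 1)) at 1; apply Rmult_le_compat_l; nra).
unfold energy. lra.
Qed.

Lemma Aval_le_sqrt : Aval <= sqrt (psi 1).
Proof.
pose proof (psi1_pos psi psi_pos) as P1.
destruct energy_nonpos_somewhere as [x [Hx Hen]]. pose proof (energy_mono x Hx).
pose proof (dstar_nonneg 0 ltac:(lra)). pose proof (cstar_ge1 0 xmax_pos).
assert (Hsq : Aval * Aval <= psi 1).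
{ unfold energy, Aval in *.
  replace (dstar 0 / cstar 0 * (dstar 0 / cstar 0)) with ((dstar 0 * dstar 0) / (cstar 0 * cstar 0))
    by (field; lra).
  apply (Rmult_le_reg_r (cstar 0 * cstar 0)); [nra|].
  unfold Rdiv. rewrite Rmult_assoc, Rinv_l, Rmult_1_r by nra. lra. }
pose proof Aval_pos. rewrite <- (sqrt_square Aval) by lra. apply sqrt_le_1_alt. auto.
Qed.


Definition inv_sq (x : R) : R := / (cstar x * cstar x).

Lemma inv_sq_cont t : t < xmax -> continuity_pt inv_sq t.
Proof.
intros Ht. unfold inv_sq. pose proof (cstar_ge1 t Ht).
apply continuity_pt_inv; [apply continuity_pt_mult; apply cstar_cont; auto | nra].
Qed.

Lemma inv_sq_ex_RInt a b : a < xmax -> b < xmax -> ex_RInt inv_sq a b.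
Proof.
intros. apply (ex_RInt_continuous (V:=R_CompleteNormedModule)). intros z Hz.
apply continuity_pt_continuous, inv_sq_cont. unfold Rmin, Rmax in Hz; destruct Rle_dec; lra.
Qed.

Definition J (x : R) : R := RInt inv_sq x 0.

Lemma J_0 : J 0 = 0.
Proof. apply (RInt_point (V:=R_CompleteNormedModule)). Qed.

Lemma J_derive x : x < xmax -> is_derive J x (- inv_sq x).
Proof.
intros Hx. pose proof xmax_pos. apply (is_derive_RInt' inv_sq J x 0).
- exists (mkposreal (xmax - x) ltac:(lra)). intros y Hy. change (Rabs (y - x) < xmax - x) in Hy.
  apply (RInt_correct (V:=R_CompleteNormedModule)), inv_sq_ex_RInt; [|lra].
  unfold Rabs in Hy; destruct Rcase_abs; lra.
- apply continuity_pt_continuous, inv_sq_cont; auto.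
Qed.

(* Since 1 <= cstar <= cstar 0 on (-oo,0], the integrand is at least 1 / cstar(0)^2. *)
Lemma J_lower x : x <= 0 -> - x / (cstar 0 * cstar 0) <= J x.
Proof.
intros Hx. pose proof xmax_pos. pose proof (cstar_ge1 0 xmax_pos).
assert (Hc : RInt (fun _ => / (cstar 0 * cstar 0)) x 0 = - x / (cstar 0 * cstar 0)).
{ rewrite RInt_const_mul. change ((0 - x) * / (cstar 0 * cstar 0) = - x / (cstar 0 * cstar 0)).
  unfold Rdiv. ring. }
rewrite <- Hc.
apply RInt_le; [lra | apply ex_RInt_const | apply inv_sq_ex_RInt; lra|].
intros t Ht. pose proof (cstar_ge1 t ltac:(lra)). pose proof (cstar_mono t 0 ltac:(lra) ltac:(lra)).
unfold inv_sq. apply Rinv_le_contravar; [nra | apply Rmult_le_compat; lra].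
Qed.

Definition gen_sol (K W x : R) : R := cstar x * (K - W * J x).
Definition gen_sol_deriv (K W x : R) : R := dstar x * (K - W * J x) + W / cstar x.

Lemma gen_sol_derive K W x : x < xmax -> is_derive (gen_sol K W) x (gen_sol_deriv K W x).
Proof.
intros Hx. pose proof (cstar_ge1 x Hx). eapply is_derive_eq.
- apply is_derive_mult_R; [apply cstar_derive; auto|].
  apply is_derive_minus_R; [apply is_derive_const | apply (is_derive_scal J), J_derive; auto].
- unfold gen_sol_deriv, inv_sq, zero; simpl. field. lra.
Qed.

Lemma gen_sol_deriv_derive K W x : x <= 0 ->
  is_derive (gen_sol_deriv K W) x (psi (E x) * gen_sol K W x).
Proof.
intros Hx. pose proof xmax_pos. pose proof (cstar_ge1 x ltac:(lra)). eapply is_derive_eq.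
- apply is_derive_plus_R; [apply is_derive_mult_R; [apply dstar_derive; auto|]|].
  + apply is_derive_minus_R; [apply is_derive_const | apply (is_derive_scal J), J_derive; lra].
  + apply (is_derive_scal (fun y => / cstar y)), is_derive_inv; [apply cstar_derive | ]; lra.
- unfold gen_sol, inv_sq, zero, opp; simpl. field. lra.
Qed.

Lemma gen_sol_cauchy K W : cauchy_sol psi gm s (cstar 0 * K) (dstar 0 * K + W / cstar 0) (gen_sol K W).
Proof.
pose proof xmax_pos.
exists (gen_sol_deriv K W), (fun x => psi (E x) * gen_sol K W x).
split; [|split; [|split; [|split]]].
- intros x Hx. apply is_derive_has_deriv_within, gen_sol_derive. lra.
- intros x Hx. apply is_derive_Reals, gen_sol_deriv_derive. lra.
- intros x _. unfold E. ring.
- unfold gen_sol. rewrite J_0. ring.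
- unfold gen_sol_deriv. rewrite J_0. ring.
Qed.

Lemma cauchy_existence c0 c0' : exists c, cauchy_sol psi gm s c0 c0' c.
Proof.
pose proof (cstar_ge1 0 xmax_pos).
set (K := c0 / cstar 0). set (W := cstar 0 * (c0' - dstar 0 * K)).
assert (E1 : cstar 0 * K = c0) by (unfold K; field; lra).
assert (E2 : dstar 0 * K + W / cstar 0 = c0') by (unfold W; field; lra).
exists (gen_sol K W). pose proof (gen_sol_cauchy K W) as Hsol. rewrite E1, E2 in Hsol. exact Hsol.
Qed.

(** Any solution [c] with [c 0 = c0 > 0] equals [gen_sol (c0 / cstar 0) W] on
    (-oo,0], [W] being its (constant) Wronskian with [cstar], and
    [c0' = A c0 + W / cstar 0].  If [W > 0] then [c] becomes negative, if [W < 0]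
    then [c] exceeds [c0] far to the left; so [c] is nonnegative and
    nondecreasing iff [W = 0] iff [c0' = A c0]. *)
Section Characterization.
Variables (c0 c0' : R) (c dc ddc : R -> R).
Hypothesis c0_pos : 0 < c0.
Hypothesis c_deriv : forall x, x <= 0 -> has_deriv_within Defs.nonpos c dc x.
Hypothesis dc_deriv : forall x, x < 0 -> derivable_pt_lim dc x (ddc x).
Hypothesis c_ode : forall x, x < 0 -> - ddc x + psi (exp (gm * x / s)) * c x = 0.
Hypothesis c_at0 : c 0 = c0.
Hypothesis dc_at0 : dc 0 = c0'.

Lemma c_derive x : x < 0 -> is_derive c x (dc x).
Proof. intros. apply has_deriv_within_is_derive, c_deriv; lra. Qed.

Definition wronskian (x : R) : R := cstar x * dc x - c x * dstar x.
Definition Wc : R := wronskian (-1).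
Definition Kc : R := c0 / cstar 0.

Lemma wronskian_const x : x < 0 -> wronskian x = Wc.
Proof.
intros Hx. apply zero_derive_const_neg; [|auto | lra]. clear x Hx. intros x Hx. pose proof xmax_pos.
eapply is_derive_eq.
- apply is_derive_minus_R; apply is_derive_mult_R;
    [apply cstar_derive; lra | apply is_derive_Reals, dc_deriv; auto
    |apply c_derive; auto | apply dstar_derive; lra].
- specialize (c_ode x Hx). change (exp (gm * x / s)) with (E x) in c_ode.
  replace (ddc x) with (psi (E x) * c x) by lra. ring.
Qed.

(* c / cstar + Wc J has derivative (wronskian - Wc) / cstar^2 = 0 on (-oo,0). *)
Lemma c_gen_sol_neg : exists Q, forall x, x < 0 -> c x = gen_sol Q Wc x.
Proof.
pose proof xmax_pos.
set (q x := c x / cstar x + Wc * J x). exists (q (-1)). intros x Hx.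
assert (Hq : q x = q (-1)).
{ apply zero_derive_const_neg; [|lra|lra]. clear x Hx. intros x Hx.
  pose proof (cstar_ge1 x ltac:(lra)). eapply is_derive_eq.
  - apply is_derive_plus_R; [apply is_derive_div; [apply c_derive; auto | apply cstar_derive; lra | lra]|].
    apply (is_derive_scal J), J_derive; lra.
  - rewrite <- (wronskian_const x Hx). unfold wronskian, inv_sq. field. lra. }
pose proof (cstar_ge1 x ltac:(lra)). unfold gen_sol. rewrite <- Hq. unfold q. field. lra.
Qed.

Lemma c_representation x : x <= 0 -> c x = gen_sol Kc Wc x.
Proof.
pose proof xmax_pos. pose proof (cstar_ge1 0 xmax_pos).
destruct c_gen_sol_neg as [Q HQ].
assert (HQ0 : c0 = gen_sol Q Wc 0).
{ rewrite <- c_at0. apply left_limit_unique with c.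
  - apply (has_deriv_within_left_cont c dc), c_deriv; lra.
  - apply limit1_in_ext with (gen_sol Q Wc); [intros; symmetry; auto|].
    apply continuity_pt_left_limit. eapply is_derive_continuity_pt, gen_sol_derive; auto. }
assert (HK : Q = Kc) by (unfold Kc; rewrite HQ0; unfold gen_sol; rewrite J_0; field; lra).
intros Hx. destruct (Req_dec x 0) as [->|]; [|subst Q; apply HQ; lra].
rewrite c_at0, HQ0, HK. reflexivity.
Qed.

Lemma slope_at_0 : c0' = Aval * c0 + Wc / cstar 0.
Proof.
pose proof xmax_pos. pose proof (cstar_ge1 0 xmax_pos).
replace (Aval * c0 + Wc / cstar 0) with (gen_sol_deriv Kc Wc 0)
  by (unfold gen_sol_deriv, Aval, Kc; rewrite J_0; field; lra).
rewrite <- dc_at0. apply left_limit_unique with (fun y => (c y - c 0) / (y - 0)).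
- apply has_deriv_within_left_quotient, c_deriv; lra.
- apply limit1_in_ext with (fun y => (gen_sol Kc Wc y - gen_sol Kc Wc 0) / (y - 0)).
  { intros y Hy. rewrite !c_representation by lra. reflexivity. }
  apply (limit1_in_restrict _ (fun y => Defs.nonpos y /\ y <> 0)); [intros y Hy; unfold Defs.nonpos; lra|].
  apply (is_derive_has_deriv_within (gen_sol Kc Wc) Defs.nonpos (gen_sol_deriv Kc Wc)), gen_sol_derive; auto.
Qed.

Lemma nonneg_nondecr_of_W0 : Wc = 0 -> nonneg_nondecr_on_nonpos c.
Proof.
intros HW. pose proof xmax_pos. pose proof (cstar_ge1 0 xmax_pos).
assert (HK : 0 < Kc) by (apply Rdiv_lt_0_compat; lra).
assert (Hc : forall x, x <= 0 -> c x = Kc * cstar x)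
  by (intros x Hx; rewrite c_representation by auto; unfold gen_sol; rewrite HW; ring).
split.
- intros x Hx. rewrite Hc by auto. pose proof (cstar_ge1 x ltac:(lra)). nra.
- intros x y Hxy Hy. rewrite !Hc by lra. apply Rmult_le_compat_l; [lra | apply cstar_mono; auto].
Qed.

Lemma W0_of_nonneg_nondecr : nonneg_nondecr_on_nonpos c -> Wc = 0.
Proof.
intros [Hnn Hnd]. pose proof xmax_pos. pose proof (cstar_ge1 0 xmax_pos).
destruct (Req_dec Wc 0) as [|HW]; auto. exfalso.
assert (HK : 0 < Kc <= c0).
{ unfold Kc. split; [apply Rdiv_lt_0_compat; lra|].
  apply (Rmult_le_reg_r (cstar 0)); [lra|]. unfold Rdiv. rewrite Rmult_assoc, Rinv_l by lra. nra. }
pose proof (Rabs_pos_lt _ HW) as HaW.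
set (x := - (c0 + 1) * (cstar 0 * cstar 0) / Rabs Wc).
assert (Hx : x < 0) by (unfold x; apply Rdiv_neg_pos; [nra | auto]).
assert (HJ : c0 + 1 <= Rabs Wc * J x).
{ pose proof (J_lower x ltac:(lra)) as HJ.
  replace (- x / (cstar 0 * cstar 0)) with ((c0 + 1) / Rabs Wc) in HJ by (unfold x; field; lra).
  apply (Rmult_le_compat_l (Rabs Wc)) in HJ; [|lra].
  replace (Rabs Wc * ((c0 + 1) / Rabs Wc)) with (c0 + 1) in HJ by (field; lra). lra. }
pose proof (cstar_ge1 x ltac:(lra)). pose proof (c_representation x ltac:(lra)) as Hcx. unfold gen_sol in Hcx.
destruct (Rlt_dec 0 Wc) as [Wpos|Wneg].
- rewrite Rabs_right in HJ by lra. specialize (Hnn x ltac:(lra)). nra.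
- rewrite Rabs_left in HJ by lra. specialize (Hnd x 0 ltac:(lra) ltac:(lra)). rewrite c_at0 in Hnd. nra.
Qed.

Lemma characterization : nonneg_nondecr_on_nonpos c <-> c0' = Aval * c0.
Proof.
pose proof (cstar_ge1 0 xmax_pos). rewrite slope_at_0.
split; intros H1.
- rewrite (W0_of_nonneg_nondecr H1). field. lra.
- apply nonneg_nondecr_of_W0.
  assert (Wc / cstar 0 = 0) by lra. apply (Rmult_eq_reg_r (/ cstar 0)); [|apply Rinv_neq_0_compat; lra].
  unfold Rdiv in *. lra.
Qed.

End Characterization.

End DistinguishedSolution.

Section AFunction.
Variables (psi dpsi : R -> R).
Hypothesis psi_deriv : forall x, in01 x -> has_deriv_within in01 psi dpsi x.
Hypothesis psi0 : psi 0 = 0.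
Variable L : R.
Hypothesis phi_bound : forall r, 0 <= phi psi dpsi r <= L.
Variable gm : R.

Let P : R -> R := phi psi dpsi.
Let P_cont : cont_R P := phi_cont psi dpsi psi_deriv psi0.

Definition Afun (s : R) : R :=
  s / gm * PSeries (fun n => vcoef P n 1) ((s / gm) ^ 2)
    / PSeries (fun n => acoef P n 1) ((s / gm) ^ 2).

Lemma Afun_0 : Afun 0 = 0.
Proof. unfold Afun, Rdiv. ring. Qed.

Lemma Afun_Aval s : 0 < s -> Afun s = Aval psi dpsi gm s.
Proof.
intros hs. unfold Afun, Aval, dstar, cstar, Vser, Cser. rewrite (E_0 gm s hs). unfold lam, kk.
replace ((s / gm) ^ 2) with (s / gm * (s / gm)) by ring. reflexivity.
Qed.

Lemma Afun_cont : cont_R Afun.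
Proof.
pose proof (L_nonneg P L phi_bound) as HL.
assert (Ha : cont_R (PSeries (fun n => acoef P n 1))).
{ apply (PSeries_expo_cont _ 1 L HL). intros n.
  rewrite Rabs_right by (apply Rle_ge, (acoef_nonneg P L); auto; lra).
  rewrite Rmult_1_l. replace (L ^ n) with ((L * 1) ^ n) by (f_equal; ring).
  apply (acoef_le P L); auto; lra. }
assert (Hv : cont_R (PSeries (fun n => vcoef P n 1))).
{ apply (PSeries_expo_cont _ L L HL). intros n.
  destruct (vcoef_bound P L P_cont phi_bound n 1) as [h1 h2]; [lra|].
  rewrite Rabs_right by lra. eapply Rle_trans; [exact h2|]. rewrite Rmult_1_l.
  apply Rmult_le_compat_l; auto. replace (L ^ n) with ((L * 1) ^ n) by (f_equal; ring).
  apply (acoef_le P L); auto; lra. }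
assert (Hsq : cont_R (fun s => (s / gm) ^ 2)) by (apply cont_R_ex_derive; intros; auto_derive; auto).
assert (Hlin : cont_R (fun s => s / gm)) by (apply cont_R_ex_derive; intros; auto_derive; auto).
intros s. pose proof (Cser_ge1 P L P_cont phi_bound ((s / gm) ^ 2) (pow2_ge_0 _) 1 ltac:(lra)) as Hden.
unfold Cser in Hden. unfold Afun. apply continuity_pt_div; [apply continuity_pt_mult| |lra].
- apply Hlin.
- apply (continuity_pt_comp (fun s => (s / gm) ^ 2) (PSeries (fun n => vcoef P n 1))); auto.
- apply (continuity_pt_comp (fun s => (s / gm) ^ 2) (PSeries (fun n => acoef P n 1))); auto.
Qed.

End AFunction.

(* int_0^1 psi(v)/v dv exists (psi(v)/v = phi(v) on (0,1]) and equals vcoef phi 0 1. *)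
Lemma psi_quot_integral psi dpsi :
  (forall x, in01 x -> has_deriv_within in01 psi dpsi x) -> psi 0 = 0 ->
  exists pr : Riemann_integrable (fun v => psi v / v) 0 1,
    RiemannInt pr = vcoef (phi psi dpsi) 0 1.
Proof.
intros psi_deriv psi0.
assert (Hext : forall x, Rmin 0 1 < x < Rmax 0 1 ->
  phi psi dpsi x * acoef (phi psi dpsi) 0 x = psi x / x).
{ intros x Hx. rewrite Rmin_left, Rmax_right in Hx by lra. simpl.
  rewrite <- (phi_spec psi dpsi x) by lra. field. lra. }
assert (Hex : ex_RInt (fun v => psi v / v) 0 1).
{ apply (ex_RInt_ext _ _ _ _ Hext), cont_R_RInt, ph_acoef_cont, phi_cont; auto. }
exists (ex_RInt_Reals_0 _ _ _ Hex). rewrite <- RInt_Reals.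
unfold vcoef. symmetry. apply RInt_ext. auto.
Qed.

Theorem lemma3p1 (gm : R) (psi : R -> R)
  (hgm : 0 < gm)
  (hC1 : C1_on_01 psi)
  (h0 : psi 0 = 0)
  (hpos : forall z, 0 < z < 1 -> 0 < psi z <= psi 1) :
  exists A : R -> R,
    (forall s, 0 < s -> continuity_pt A s) /\
    (forall s, 0 < s -> 0 < A s <= sqrt (psi 1)) /\
    (forall s c0 c0', 0 < s -> 0 < c0 ->
       (exists c, cauchy_sol psi gm s c0 c0' c) /\
       (forall c, cauchy_sol psi gm s c0 c0' c ->
          (nonneg_nondecr_on_nonpos c <-> c0' = A s * c0))) /\
    (exists pr : Riemann_integrable (fun v => psi v / v) 0 1,
       forall s, 0 < s -> A s <= s / gm * RiemannInt pr) /\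
    A 0 = 0 /\
    limit1_in A (fun s => 0 < s) 0 0.
Proof.
destruct hC1 as [dpsi [Hd _]].
destruct (phi_bounded psi dpsi Hd h0 hpos) as [L HL].
pose proof (Afun_Aval psi dpsi gm) as HA.
exists (Afun psi dpsi gm). split; [|split; [|split; [|split; [|split]]]].
- intros s _. apply (Afun_cont psi dpsi Hd h0 L HL gm).
- intros s hs. rewrite HA by auto.
  split; [apply (Aval_pos psi dpsi Hd h0 hpos L HL) | apply (Aval_le_sqrt psi dpsi Hd h0 hpos L HL)];
    auto.
- intros s c0 c0' hs hc0. split; [apply (cauchy_existence psi dpsi Hd h0 L HL); auto|].
  intros c [dc [ddc [H1 [H2 [H3 [H4 H5]]]]]]. rewrite HA by auto.
  apply (characterization psi dpsi Hd h0 L HL gm s hgm hs c0 c0' c dc ddc); auto.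
- destruct (psi_quot_integral psi dpsi Hd h0) as [pr Hpr]. exists pr. intros s hs.
  rewrite HA, Hpr by auto. apply (Aval_le_integral psi dpsi Hd h0 L HL); auto.
- apply Afun_0.
- pose proof (Afun_cont psi dpsi Hd h0 L HL gm 0) as Hc. unfold continuity_pt, continue_in in Hc.
  rewrite Afun_0 in Hc. revert Hc. apply limit1_in_restrict. intros y Hy. split; [exact I | lra].
Qed.
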